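(* Every shifted hyperbolic operator $T\in L_{aut}(\mathcal B)$ has the shadowing property but does not have the unique shadowing property.
   Context: $\mathcal B$ is a Banach space. $T$ is generalized hyperbolic if there is a decomposition $\mathcal B=E^-\oplus E^+$ into complementary closed subspaces with $T(E^+)\subset E^+$, $T^{-1}(E^-)\subset E^-$, and $T|_{E^+}$, $T^{-1}|_{E^-}$ uniform contractions; $T$ is shifted hyperbolic if in addition $E^-\cap T^{-1}(E^+)\ne\{0\}$. A $\delta$-pseudo-orbit is a sequence $(x_n)_{n\in\mathbb Z}$ with $|x_{n+1}-Tx_n|<\delta$; $y$ $\varepsilon$-shadows it if $|x_n-T^ny|<\varepsilon$ for all $n$. Shadowing property: for every $\varepsilon>0$ there is $\delta>0$ such that every $\delta$-pseudo-orbit is $\varepsilon$-shadowed. Unique shadowing property: there exist $\varepsilon_0,\delta_0>0$ such that for every $0<\varepsilon\le\varepsilon_0$ there is $0<\delta\le\delta_0$ such that every $\delta$-pseudo-orbit is $\varepsilon$-shadowed by exactly one point. *)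

From Stdlib Require Import Reals ZArith.
Open Scope R_scope.

Record BanachSpace := {
  bs_car :> Type;
  bs_zero : bs_car;
  bs_add : bs_car -> bs_car -> bs_car;
  bs_opp : bs_car -> bs_car;
  bs_scal : R -> bs_car -> bs_car;
  bs_norm : bs_car -> R;
  bs_addA : forall x y z, bs_add x (bs_add y z) = bs_add (bs_add x y) z;
  bs_addC : forall x y, bs_add x y = bs_add y x;
  bs_add0 : forall x, bs_add x bs_zero = x;
  bs_addN : forall x, bs_add x (bs_opp x) = bs_zero;
  bs_scal1 : forall x, bs_scal 1 x = x;
  bs_scalA : forall a b x, bs_scal a (bs_scal b x) = bs_scal (a * b) x;
  bs_scalDr : forall a x y, bs_scal a (bs_add x y) = bs_add (bs_scal a x) (bs_scal a y);
  bs_scalDl : forall a b x, bs_scal (a + b) x = bs_add (bs_scal a x) (bs_scal b x);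
  bs_norm_eq0 : forall x, bs_norm x = 0 -> x = bs_zero;
  bs_normZ : forall a x, bs_norm (bs_scal a x) = Rabs a * bs_norm x;
  bs_normD : forall x y, bs_norm (bs_add x y) <= bs_norm x + bs_norm y;
  bs_complete : forall u : nat -> bs_car,
    (forall e, 0 < e -> exists N, forall m n, (N <= m)%nat -> (N <= n)%nat ->
        bs_norm (bs_add (u m) (bs_opp (u n))) < e) ->
    exists l, forall e, 0 < e -> exists N, forall n, (N <= n)%nat ->
        bs_norm (bs_add (u n) (bs_opp l)) < e
}.

Arguments bs_zero {_}.
Arguments bs_add {_} _ _.
Arguments bs_opp {_} _.
Arguments bs_scal {_} _ _.
Arguments bs_norm {_} _.

Section Ops.
Context {B : BanachSpace}.

Definition bs_sub (x y : B) : B := bs_add x (bs_opp y).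

Definition is_linear (T : B -> B) : Prop :=
  (forall x y, T (bs_add x y) = bs_add (T x) (T y)) /\
  (forall a x, T (bs_scal a x) = bs_scal a (T x)).

Definition is_bounded_linear (T : B -> B) : Prop :=
  is_linear T /\ exists C, forall x, bs_norm (T x) <= C * bs_norm x.

Definition is_aut (T : B -> B) : Prop :=
  is_bounded_linear T /\
  exists S : B -> B, is_bounded_linear S /\
    (forall x, S (T x) = x) /\ (forall x, T (S x) = x).

Definition closed_subspace (E : B -> Prop) : Prop :=
  E bs_zero /\
  (forall x y, E x -> E y -> E (bs_add x y)) /\
  (forall a x, E x -> E (bs_scal a x)) /\
  (forall (u : nat -> B) l, (forall n, E (u n)) ->
     (forall e, 0 < e -> exists N, forall n, (N <= n)%nat -> bs_norm (bs_sub (u n) l) < e) ->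
     E l).

Definition complementary (E1 E2 : B -> Prop) : Prop :=
  closed_subspace E1 /\ closed_subspace E2 /\
  (forall x, E1 x -> E2 x -> x = bs_zero) /\
  (forall x, exists a b, E1 a /\ E2 b /\ x = bs_add a b).

Fixpoint iter_op (T : B -> B) (n : nat) (x : B) : B :=
  match n with O => x | S k => T (iter_op T k x) end.

Definition uniform_contraction_on (U : B -> B) (E : B -> Prop) : Prop :=
  exists C t, 0 < C /\ 0 < t < 1 /\
    forall n x, E x -> bs_norm (iter_op U n x) <= C * t ^ n * bs_norm x.

Definition gen_hyperbolic_splitting (T Tinv : B -> B) (Em Ep : B -> Prop) : Prop :=
  complementary Em Ep /\
  (forall x, Ep x -> Ep (T x)) /\
  (forall x, Em x -> Em (Tinv x)) /\
  uniform_contraction_on T Ep /\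
  uniform_contraction_on Tinv Em.

Definition shifted_hyperbolic (T : B -> B) : Prop :=
  exists Tinv Em Ep,
    (forall x, Tinv (T x) = x) /\ (forall x, T (Tinv x) = x) /\
    gen_hyperbolic_splitting T Tinv Em Ep /\
    exists x, x <> bs_zero /\ Em x /\ Ep (T x).

Definition pseudo_orbit (T : B -> B) (delta : R) (x : Z -> B) : Prop :=
  forall n : Z, bs_norm (bs_sub (x (n + 1)%Z) (T (x n))) < delta.

(** y eps-shadows x: |x_n - T^n y| < eps for all n in Z; here T^n y, n in Z,
    is described as the unique full orbit z with z 0 = y, z (n+1) = T (z n)
    (T being invertible). *)
Definition shadows (T : B -> B) (eps : R) (y : B) (x : Z -> B) : Prop :=
  exists z : Z -> B, z 0%Z = y /\ (forall n : Z, z (n + 1)%Z = T (z n)) /\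
    forall n : Z, bs_norm (bs_sub (x n) (z n)) < eps.

Definition shadowing_property (T : B -> B) : Prop :=
  forall eps, 0 < eps -> exists delta, 0 < delta /\
    forall x, pseudo_orbit T delta x -> exists y, shadows T eps y x.

Definition unique_shadowing_property (T : B -> B) : Prop :=
  exists eps0 delta0, 0 < eps0 /\ 0 < delta0 /\
    forall eps, 0 < eps -> eps <= eps0 ->
      exists delta, 0 < delta /\ delta <= delta0 /\
        forall x, pseudo_orbit T delta x ->
          exists y, shadows T eps y x /\ forall y', shadows T eps y' x -> y' = y.

End Ops.

(** Given a delta-pseudo-orbit x with defects
    d n = x (n+1) - T (x n), we look for a bounded u with
    u (n+1) = d n + T (u n); then x - u is an exact orbit. Splitting
    d n = a n + b n along Em (+) Ep, the series
    U n = sum_k T^k b (n-1-k) and V n = sum_k T^-(k+1) a (n+k) converge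
    geometrically and u = U - V works. The splitting must be bounded
    (|a n|, |b n| <= K |d n|); since the definition of complementary subspaces
    only asks for closedness, this is derived from completeness through the
    Baire category theorem and an open-mapping style successive approximation.

    A nonzero x0 in Em with T x0 in Ep has a full orbit
    bounded both forwards (contraction on Ep) and backwards (contraction of
    T^-1 on Em), so small multiples of x0 and 0 itself both shadow the zero
    pseudo-orbit. *)

From Pilot Require Import Defs.
From Stdlib Require Import Reals ZArith Lra Lia ClassicalEpsilon.
Open Scope R_scope.

Section VectorAlgebra.
Context {B : BanachSpace}.

Lemma add0l (x : B) : bs_add bs_zero x = x.
Proof. rewrite bs_addC. apply bs_add0. Qed.

Lemma addNl (x : B) : bs_add (bs_opp x) x = bs_zero.
Proof. rewrite bs_addC. apply bs_addN. Qed.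

Lemma add_cancel (x y z : B) : bs_add x y = bs_add x z -> y = z.
Proof.
  intro H. rewrite <- (add0l y), <- (add0l z), <- (addNl x), <- !bs_addA, H.
  reflexivity.
Qed.

Lemma opp_unique (x y : B) : bs_add x y = bs_zero -> y = bs_opp x.
Proof. intro H. apply (add_cancel x). rewrite H, bs_addN. reflexivity. Qed.

Lemma oppK (x : B) : bs_opp (bs_opp x) = x.
Proof. symmetry. apply opp_unique, addNl. Qed.

Lemma addACA (a b c d : B) :
  bs_add (bs_add a b) (bs_add c d) = bs_add (bs_add a c) (bs_add b d).
Proof. rewrite <- !bs_addA. f_equal. rewrite !bs_addA. f_equal. apply bs_addC. Qed.

Lemma oppD (x y : B) : bs_opp (bs_add x y) = bs_add (bs_opp x) (bs_opp y).
Proof. symmetry. apply opp_unique. rewrite addACA, !bs_addN. apply bs_add0. Qed.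

Lemma subK (x y : B) : bs_add (bs_sub x y) y = x.
Proof. unfold bs_sub. rewrite <- bs_addA, addNl. apply bs_add0. Qed.

Lemma addK (x y : B) : bs_sub (bs_add x y) y = x.
Proof. unfold bs_sub. rewrite <- bs_addA, bs_addN. apply bs_add0. Qed.

Lemma sub_subK (x y : B) : bs_sub x (bs_sub x y) = y.
Proof. unfold bs_sub. rewrite oppD, oppK, bs_addA, bs_addN. apply add0l. Qed.

Lemma subrr (x : B) : bs_sub x x = bs_zero.
Proof. apply bs_addN. Qed.

Lemma sub0 (x : B) : bs_sub x bs_zero = x.
Proof.
  unfold bs_sub. rewrite <- (opp_unique bs_zero bs_zero (bs_add0 _ _)). apply bs_add0.
Qed.

Lemma subD (a b c d : B) :
  bs_sub (bs_add a b) (bs_add c d) = bs_add (bs_sub a c) (bs_sub b d).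
Proof. unfold bs_sub. rewrite oppD. apply addACA. Qed.

Lemma sub_sub_swap (x y z t : B) :
  bs_sub (bs_sub x y) (bs_sub z t) = bs_sub (bs_sub x z) (bs_sub y t).
Proof.
  change (bs_sub (bs_add x (bs_opp y)) (bs_add z (bs_opp t)) = bs_sub (bs_sub x z) (bs_sub y t)).
  rewrite subD. unfold bs_sub. rewrite oppD. reflexivity.
Qed.

Lemma sub_add_sub (a b y z : B) :
  bs_sub (bs_add b y) (bs_sub z a) = bs_add (bs_add a b) (bs_sub y z).
Proof.
  unfold bs_sub. rewrite oppD, oppK, (bs_addC _ (bs_opp z)), addACA, (bs_addC _ b a).
  reflexivity.
Qed.

Lemma scal0 (x : B) : bs_scal 0 x = bs_zero.
Proof.
  apply (add_cancel (bs_scal 0 x)). rewrite <- bs_scalDl, Rplus_0_l, bs_add0.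
  reflexivity.
Qed.

Lemma scalx0 (a : R) : bs_scal a (@bs_zero B) = bs_zero.
Proof.
  apply (add_cancel (bs_scal a bs_zero)). rewrite <- bs_scalDr, !bs_add0. reflexivity.
Qed.

Lemma opp_scal (x : B) : bs_opp x = bs_scal (-1) x.
Proof.
  symmetry. apply opp_unique. rewrite <- (bs_scal1 _ x) at 1. rewrite <- bs_scalDl.
  replace (1 + -1) with 0 by ring. apply scal0.
Qed.

Lemma scal_sub (a : R) (x y : B) :
  bs_scal a (bs_sub x y) = bs_sub (bs_scal a x) (bs_scal a y).
Proof. unfold bs_sub. rewrite bs_scalDr, !opp_scal, !bs_scalA, Rmult_comm. reflexivity. Qed.

Lemma scal_neq0 (a : R) (x : B) : a <> 0 -> x <> bs_zero -> bs_scal a x <> bs_zero.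
Proof.
  intros Ha Hx H. apply Hx.
  rewrite <- (bs_scal1 _ x), <- (Rinv_l a Ha), <- bs_scalA, H. apply scalx0.
Qed.

Lemma norm0 : bs_norm (@bs_zero B) = 0.
Proof. rewrite <- (scal0 bs_zero), bs_normZ, Rabs_R0. ring. Qed.

Lemma norm_opp (x : B) : bs_norm (bs_opp x) = bs_norm x.
Proof. rewrite opp_scal, bs_normZ, Rabs_left by lra. ring. Qed.

Lemma norm_ge0 (x : B) : 0 <= bs_norm x.
Proof.
  pose proof (bs_normD _ x (bs_opp x)) as H. rewrite bs_addN, norm0, norm_opp in H. lra.
Qed.

Lemma sub_sym_norm (x y : B) : bs_norm (bs_sub x y) = bs_norm (bs_sub y x).
Proof. rewrite <- norm_opp. unfold bs_sub. rewrite oppD, oppK, bs_addC. reflexivity. Qed.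

Lemma sub_tri (x y z : B) :
  bs_norm (bs_sub x z) <= bs_norm (bs_sub x y) + bs_norm (bs_sub y z).
Proof.
  replace (bs_sub x z) with (bs_add (bs_sub x y) (bs_sub y z)) by
    (unfold bs_sub; rewrite <- bs_addA, (bs_addA _ (bs_opp y)), addNl, add0l; reflexivity).
  apply bs_normD.
Qed.

Lemma norm_sub_le (x y : B) : bs_norm (bs_sub x y) <= bs_norm x + bs_norm y.
Proof. unfold bs_sub. rewrite <- (norm_opp y). apply bs_normD. Qed.

Lemma norm_small_eq (x y : B) :
  (forall e, 0 < e -> bs_norm (bs_sub x y) <= e) -> x = y.
Proof.
  intro H. rewrite <- (subK x y). enough (bs_sub x y = bs_zero) as -> by apply add0l.
  apply bs_norm_eq0. pose proof (norm_ge0 (bs_sub x y)).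
  destruct (Rle_lt_or_eq_dec 0 _ H0) as [Hpos|]; [|auto].
  specialize (H (bs_norm (bs_sub x y) / 2)). lra.
Qed.

Lemma sub_closed (E : B -> Prop) (x y : B) :
  closed_subspace E -> E x -> E y -> E (bs_sub x y).
Proof. intros (_ & Hadd & Hscal & _) Hx Hy. unfold bs_sub. rewrite opp_scal. auto. Qed.

Lemma lin0 (T : B -> B) : is_linear T -> T bs_zero = bs_zero.
Proof.
  intros [Hadd _]. apply (add_cancel (T bs_zero)). rewrite <- Hadd, !bs_add0. reflexivity.
Qed.

Lemma lin_sub (T : B -> B) (x y : B) :
  is_linear T -> T (bs_sub x y) = bs_sub (T x) (T y).
Proof.
  intros [Hadd Hscal]. unfold bs_sub. rewrite Hadd, !opp_scal, Hscal. reflexivity.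
Qed.

End VectorAlgebra.

Section Limits.
Context {B : BanachSpace}.

Definition lim (u : nat -> B) (l : B) : Prop :=
  forall e, 0 < e -> exists N, forall n, (N <= n)%nat -> bs_norm (bs_sub (u n) l) < e.

Lemma lim_unique (u : nat -> B) (l1 l2 : B) : lim u l1 -> lim u l2 -> l1 = l2.
Proof.
  intros H1 H2. apply norm_small_eq. intros e he.
  destruct (H1 (e/2)) as [N1 h1]; [lra|]. destruct (H2 (e/2)) as [N2 h2]; [lra|].
  specialize (h1 (N1 + N2)%nat ltac:(lia)). specialize (h2 (N1 + N2)%nat ltac:(lia)).
  pose proof (sub_tri l1 (u (N1 + N2)%nat) l2). rewrite sub_sym_norm in h1. lra.
Qed.

Lemma lim_const (c : B) : lim (fun _ => c) c.
Proof. intros e he. exists O. intros. rewrite subrr, norm0. lra. Qed.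

Lemma lim_ext (u v : nat -> B) (l : B) : (forall n, u n = v n) -> lim u l -> lim v l.
Proof. intros E H e he. destruct (H e he) as [N h]. exists N. intros. rewrite <- E. auto. Qed.

Lemma lim_shiftn (u : nat -> B) (l : B) (k : nat) : lim u l -> lim (fun n => u (k + n)%nat) l.
Proof. intros H e he. destruct (H e he) as [N h]. exists N. intros. apply h. lia. Qed.

Lemma lim_add (u v : nat -> B) (l1 l2 : B) : lim u l1 -> lim v l2 ->
  lim (fun n => bs_add (u n) (v n)) (bs_add l1 l2).
Proof.
  intros H1 H2 e he.
  destruct (H1 (e/2)) as [N1 h1]; [lra|]. destruct (H2 (e/2)) as [N2 h2]; [lra|].
  exists (N1 + N2)%nat. intros n hn. rewrite subD.
  specialize (h1 n ltac:(lia)). specialize (h2 n ltac:(lia)).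
  pose proof (bs_normD _ (bs_sub (u n) l1) (bs_sub (v n) l2)). lra.
Qed.

Lemma lim_bounded_linear (T : B -> B) (u : nat -> B) (l : B) :
  is_bounded_linear T -> lim u l -> lim (fun n => T (u n)) (T l).
Proof.
  intros [HL [C HC]] H e he.
  pose proof (Rabs_pos C). pose proof (Rle_abs C).
  destruct (H (e / (Rabs C + 1))) as [N h]; [apply Rdiv_lt_0_compat; lra|].
  exists N. intros n hn. rewrite <- lin_sub by exact HL.
  specialize (h n hn). specialize (HC (bs_sub (u n) l)).
  pose proof (norm_ge0 (bs_sub (u n) l)).
  apply (Rmult_lt_compat_l (Rabs C + 1)) in h; [|lra].
  replace ((Rabs C + 1) * (e / (Rabs C + 1))) with e in h by (field; lra). nra.
Qed.

Lemma lim_dist_le (u : nat -> B) (l c : B) (M : R) : lim u l ->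
  (forall n, bs_norm (bs_sub (u n) c) <= M) -> bs_norm (bs_sub l c) <= M.
Proof.
  intros H Hb. apply Rnot_lt_le. intro Hlt.
  destruct (H (bs_norm (bs_sub l c) - M)) as [N h]; [lra|].
  specialize (h N (le_n _)). specialize (Hb N).
  pose proof (sub_tri l (u N) c). rewrite sub_sym_norm in h. lra.
Qed.

Lemma lim_closed (E : B -> Prop) (u : nat -> B) (l : B) :
  closed_subspace E -> (forall n, E (u n)) -> lim u l -> E l.
Proof. intros (_ & _ & _ & HE) Hu Hl. exact (HE u l Hu Hl). Qed.

Lemma geom_small (M q e : R) : 0 <= q < 1 -> 0 < e ->
  exists N, forall n, (N <= n)%nat -> M * q ^ n < e.
Proof.
  intros Hq He. pose proof (Rabs_pos M). pose proof (Rle_abs M).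
  destruct (pow_lt_1_zero q ltac:(rewrite Rabs_right; lra) (e / (Rabs M + 1)))
    as [N HN]; [apply Rdiv_lt_0_compat; lra|].
  exists N. intros n Hn. specialize (HN n Hn).
  rewrite Rabs_right in HN by (apply Rle_ge, pow_le; lra).
  pose proof (pow_le q n (proj1 Hq)).
  apply (Rmult_lt_compat_l (Rabs M + 1)) in HN; [|lra].
  replace ((Rabs M + 1) * (e / (Rabs M + 1))) with e in HN by (field; lra). nra.
Qed.

Lemma pow_le_one (t : R) (k : nat) : 0 <= t <= 1 -> t ^ k <= 1.
Proof. intro Ht. rewrite <- (pow1 k). apply pow_incr. exact Ht. Qed.

Lemma lim_geometric (u : nat -> B) (l : B) (M q : R) : 0 <= q < 1 ->
  (forall n, bs_norm (bs_sub (u n) l) <= M * q ^ n) -> lim u l.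
Proof.
  intros Hq Hu e He. destruct (geom_small M q e Hq He) as [N HN].
  exists N. intros n Hn. specialize (Hu n). specialize (HN n Hn). lra.
Qed.

Lemma cauchy_tail (u : nat -> B) (e : nat -> R) (M q : R) : 0 <= q < 1 ->
  (forall n, e n <= M * q ^ n) ->
  (forall n p, bs_norm (bs_sub (u (n + p)%nat) (u n)) <= e n) ->
  exists l, lim u l /\ forall n, bs_norm (bs_sub l (u n)) <= e n.
Proof.
  intros Hq He Ht.
  assert (Hosc : forall m n, (n <= m)%nat -> bs_norm (bs_sub (u m) (u n)) <= M * q ^ n).
  { intros m n h. replace m with (n + (m - n))%nat by lia.
    specialize (Ht n (m - n)%nat). specialize (He n). lra. }
  destruct (bs_complete B u) as [l Hl].
  - intros eps Heps. destruct (geom_small M q eps Hq Heps) as [N HN].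
    exists N. intros m n Hm Hn. change (bs_norm (bs_sub (u m) (u n)) < eps).
    destruct (Nat.le_ge_cases n m) as [h|h].
    + specialize (Hosc m n h). specialize (HN n Hn). lra.
    + rewrite sub_sym_norm. specialize (Hosc n m h). specialize (HN m Hm). lra.
  - exists l. split; [exact Hl|]. intro n.
    apply (lim_dist_le (fun k => u (n + k)%nat)); [apply lim_shiftn; exact Hl | apply Ht].
Qed.

Fixpoint psum (f : nat -> B) (N : nat) : B :=
  match N with O => bs_zero | S k => bs_add (f O) (psum (fun k => f (S k)) k) end.

Lemma psum_ext (f g : nat -> B) (N : nat) : (forall k, f k = g k) -> psum f N = psum g N.
Proof.
  revert f g. induction N; intros f g E; simpl; auto. rewrite E. f_equal. apply IHN. auto.
Qed.

Lemma psum_linear (T : B -> B) (f : nat -> B) (N : nat) : is_linear T ->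
  T (psum f N) = psum (fun k => T (f k)) N.
Proof.
  intro HT. revert f. induction N; intros f; simpl; [apply lin0; auto|].
  rewrite (proj1 HT), IHN. reflexivity.
Qed.

Lemma psum_back (f : nat -> B) (N : nat) : psum f (S N) = bs_add (psum f N) (f N).
Proof.
  revert f. induction N; intros f.
  - simpl. rewrite bs_add0, add0l. reflexivity.
  - change (psum f (S (S N))) with (bs_add (f O) (psum (fun k => f (S k)) (S N))).
    rewrite IHN. simpl. apply bs_addA.
Qed.

Lemma psum_split (f : nat -> B) (n p : nat) :
  psum f (n + p) = bs_add (psum f n) (psum (fun k => f (n + k)%nat) p).
Proof.
  revert f. induction n; intros f; simpl.
  - rewrite add0l. apply psum_ext. reflexivity.
  - rewrite IHn, bs_addA. reflexivity.
Qed.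

Lemma psum_closed (E : B -> Prop) (f : nat -> B) (N : nat) :
  closed_subspace E -> (forall k, E (f k)) -> E (psum f N).
Proof.
  intros HE. revert f. induction N; intros f Hf; simpl; apply HE; auto.
Qed.

Lemma psum_bound (f : nat -> B) (M q : R) (N : nat) : 0 <= q < 1 ->
  (forall k, bs_norm (f k) <= M * q ^ k) ->
  bs_norm (psum f N) <= M * (1 - q ^ N) / (1 - q).
Proof.
  intros Hq. revert f M. induction N; intros f M Hf; simpl.
  - rewrite norm0. replace (M * (1 - 1) / (1 - q)) with 0 by (field; lra). lra.
  - assert (Htail : forall k, bs_norm (f (S k)) <= M * q * q ^ k).
    { intro k. specialize (Hf (S k)). simpl in Hf. lra. }
    specialize (IHN _ _ Htail). specialize (Hf O). simpl in Hf.
    pose proof (bs_normD _ (f O) (psum (fun k => f (S k)) N)).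
    assert (M * q * (1 - q ^ N) / (1 - q) + M * 1 = M * (1 - q * q ^ N) / (1 - q))
      by (field; lra).
    lra.
Qed.

Lemma series_conv (f : nat -> B) (M q : R) : 0 <= q < 1 ->
  (forall k, bs_norm (f k) <= M * q ^ k) ->
  exists L, lim (psum f) L /\ bs_norm L <= M / (1 - q).
Proof.
  intros Hq Hf.
  assert (HM : 0 <= M) by (specialize (Hf O); simpl in Hf; pose proof (norm_ge0 (f O)); lra).
  assert (Htail : forall n p,
    bs_norm (bs_sub (psum f (n + p)) (psum f n)) <= M / (1 - q) * q ^ n).
  { intros n p. rewrite psum_split, bs_addC, addK.
    assert (Hf' : forall k, bs_norm (f (n + k)%nat) <= M * q ^ n * q ^ k).
    { intro k. rewrite Rmult_assoc, <- pow_add. apply Hf. }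
    pose proof (psum_bound _ _ q p Hq Hf').
    pose proof (pow_le q p (proj1 Hq)). pose proof (pow_le q n (proj1 Hq)).
    assert (0 <= M * q ^ n) by (apply Rmult_le_pos; lra).
    assert (M * q ^ n * (1 - q ^ p) <= M * q ^ n) by nra.
    apply (Rle_trans _ (M * q ^ n * (1 - q ^ p) / (1 - q))); [lra|].
    replace (M / (1 - q) * q ^ n) with (M * q ^ n / (1 - q)) by (field; lra).
    apply Rmult_le_compat_r; [left; apply Rinv_0_lt_compat|]; lra. }
  destruct (cauchy_tail (psum f) (fun n => M / (1 - q) * q ^ n) (M / (1 - q)) q Hq
              (fun n => Rle_refl _) Htail) as (L & HL & Hbound).
  exists L. split; [exact HL|]. specialize (Hbound O). simpl in Hbound.
  rewrite sub0 in Hbound. lra.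
Qed.

End Limits.

Section Baire.
Context {B : BanachSpace}.

Lemma dependent_choice {A : Type} (Rel : nat -> A -> A -> Prop) (a0 : A) :
  (forall n a, exists a', Rel n a a') ->
  exists s : nat -> A, s O = a0 /\ forall n, Rel n (s n) (s (S n)).
Proof.
  intro H.
  destruct (choice (fun (na : nat * A) a' => Rel (fst na) (snd na) a')) as [g Hg].
  { intros [n a]. apply H. }
  exists (fix s n := match n with O => a0 | S k => g (k, s k) end).
  split; [reflexivity|]. intro n. exact (Hg (n, _)).
Qed.

(** If each F m can be avoided inside every ball (by a smaller ball), then a
    nested sequence of balls, each avoiding the next F m, shrinks to a point
    lying in none of the F m. *)
Lemma escape_nested_balls (F : nat -> B -> Prop) :
  (forall m c r, 0 < r -> exists c' r', 0 < r' <= r / 2 /\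
     bs_norm (bs_sub c' c) <= r /\ forall z, F m z -> 2 * r' < bs_norm (bs_sub z c')) ->
  exists x, forall m, ~ F m x.
Proof.
  intro Havoid.
  destruct (dependent_choice (fun m (p p' : B * R) => 0 < snd p ->
     (0 < snd p' <= snd p / 2 /\ bs_norm (bs_sub (fst p') (fst p)) <= snd p /\
      forall z, F m z -> 2 * snd p' < bs_norm (bs_sub z (fst p')))) (bs_zero, 1))
    as (s & Hs0 & Hs).
  { intros m [c r]. destruct (Rlt_or_le 0 r) as [Hr|Hr].
    - destruct (Havoid m c r Hr) as (c' & r' & H). exists (c', r'). auto.
    - exists (c, r). simpl. intro; lra. }
  set (c := fun n => fst (s n)). set (r := fun n => snd (s n)).
  assert (Hpos : forall n, 0 < r n).
  { induction n; unfold r in *; [rewrite Hs0; simpl; lra | apply (Hs n IHn)]. }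
  assert (Hstep : forall n, 0 < r (S n) <= r n / 2 /\ bs_norm (bs_sub (c (S n)) (c n)) <= r n /\
     forall z, F n z -> 2 * r (S n) < bs_norm (bs_sub z (c (S n)))) by (intro n; apply Hs, Hpos).
  assert (Hgeom : forall n, r n <= 2 * (1/2) ^ n).
  { induction n; [unfold r; rewrite Hs0; simpl; lra|].
    destruct (Hstep n) as [[_ H] _]. simpl. lra. }
  assert (Htail : forall n p, bs_norm (bs_sub (c (n + p)%nat) (c n)) <= 2 * r n - 2 * r (n + p)%nat).
  { intros n p. induction p.
    - rewrite Nat.add_0_r, subrr, norm0. lra.
    - replace (n + S p)%nat with (S (n + p)) by lia.
      destruct (Hstep (n + p)%nat) as ([_ Hhalf] & Hjump & _).
      pose proof (sub_tri (c (S (n + p))) (c (n + p)%nat) (c n)). lra. }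
  destruct (cauchy_tail c (fun n => 2 * r n) 4 (1/2) ltac:(lra)) as (l & _ & Hl).
  - intro n. specialize (Hgeom n). lra.
  - intros n p. specialize (Htail n p). pose proof (Hpos (n + p)%nat). lra.
  - exists l. intros m Hm. destruct (Hstep m) as (_ & _ & Hfar).
    specialize (Hfar l Hm). specialize (Hl (S m)). lra.
Qed.

Theorem baire_category (F : nat -> B -> Prop) : (forall x, exists m, F m x) ->
  exists m c r, 0 < r /\ forall y, bs_norm (bs_sub y c) < r ->
    forall rho, 0 < rho -> exists z, F m z /\ bs_norm (bs_sub z y) < rho.
Proof.
  intro Hcover. apply NNPP. intro Hnowhere.
  destruct (escape_nested_balls F) as [x Hx].
  - intros m c r Hr.
    assert (Hy : exists y, bs_norm (bs_sub y c) < r /\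
      exists rho, 0 < rho /\ forall z, F m z -> rho <= bs_norm (bs_sub z y)).
    { apply NNPP. intro Hno. apply Hnowhere. exists m, c, r. split; [exact Hr|].
      intros y Hyc rho Hrho. apply NNPP. intro Hfar. apply Hno. exists y. split; [exact Hyc|].
      exists rho. split; [exact Hrho|]. intros z Hz. apply Rnot_lt_le. intro Hclose.
      apply Hfar. eauto. }
    destruct Hy as (y & Hyc & rho & Hrho & Hfar).
    exists y, (Rmin (r / 2) (rho / 3)).
    pose proof (Rmin_l (r / 2) (rho / 3)). pose proof (Rmin_r (r / 2) (rho / 3)).
    split; [split; [apply Rmin_pos; lra | lra]|]. split; [lra|].
    intros z Hz. specialize (Hfar z Hz). lra.
  - destruct (Hcover x) as [m Hm]. exact (Hx m Hm).
Qed.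

End Baire.

Section BoundedDecomposition.
Context {B : BanachSpace}.
Variables Em Ep : B -> Prop.
Hypothesis Hcompl : Defs.complementary Em Ep.

Definition bounded_sums (m : nat) (z : B) : Prop :=
  exists a b, Em a /\ Ep b /\ z = bs_add a b /\ bs_norm a <= INR m /\ bs_norm b <= INR m.

Lemma bounded_sums_cover (z : B) : exists m, bounded_sums m z.
Proof.
  destruct Hcompl as (_ & _ & _ & Hdecomp). destruct (Hdecomp z) as (a & b & Ha & Hb & Hz).
  destruct (INR_unbounded (bs_norm a + bs_norm b)) as [m Hm].
  pose proof (norm_ge0 a). pose proof (norm_ge0 b).
  exists m, a, b. repeat split; auto; lra.
Qed.

(** By Baire, some bounded_sums m is dense in a ball; translating that ball to
    the origin, every small vector is approximated by a + b with a, b bounded. *)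
Lemma small_vectors_approximated :
  exists L r, 0 <= L /\ 0 < r /\ forall w, bs_norm w < r -> forall eta, 0 < eta ->
    exists a b, Em a /\ Ep b /\ bs_norm a <= L /\ bs_norm b <= L /\
      bs_norm (bs_sub w (bs_add a b)) < eta.
Proof.
  destruct (baire_category bounded_sums bounded_sums_cover) as (m & c & r & Hr & Hdense).
  pose proof Hcompl as (HEm & HEp & _ & _).
  exists (2 * INR m), r. split; [pose proof (pos_INR m); lra|]. split; [exact Hr|].
  intros w Hw eta Heta.
  assert (Hcw : bs_norm (bs_sub (bs_add c w) c) < r) by (rewrite bs_addC, addK; exact Hw).
  assert (Hc : bs_norm (bs_sub c c) < r) by (rewrite subrr, norm0; exact Hr).
  destruct (Hdense _ Hcw (eta / 2) ltac:(lra))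
    as (z1 & (a1 & b1 & Ha1 & Hb1 & -> & Hna1 & Hnb1) & Hz1).
  destruct (Hdense _ Hc (eta / 2) ltac:(lra))
    as (z2 & (a2 & b2 & Ha2 & Hb2 & -> & Hna2 & Hnb2) & Hz2).
  exists (bs_sub a1 a2), (bs_sub b1 b2).
  split; [apply sub_closed; auto|]. split; [apply sub_closed; auto|].
  split; [pose proof (norm_sub_le a1 a2); lra|].
  split; [pose proof (norm_sub_le b1 b2); lra|].
  rewrite <- subD. replace w with (bs_sub (bs_add c w) c) at 1 by (rewrite bs_addC, addK; auto).
  rewrite sub_sub_swap. pose proof (norm_sub_le (bs_sub (bs_add c w) (bs_add a1 b1))
    (bs_sub c (bs_add a2 b2))) as Htri.
  rewrite sub_sym_norm in Hz1, Hz2. lra.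
Qed.

(** Rescaling: every vector w is approximated up to |w|/2 by a + b with
    |a|, |b| <= L |w|. *)
Lemma coarse_decomposition :
  exists L, 0 <= L /\ forall w, exists a b, Em a /\ Ep b /\
    bs_norm a <= L * bs_norm w /\ bs_norm b <= L * bs_norm w /\
    bs_norm (bs_sub w (bs_add a b)) <= bs_norm w / 2.
Proof.
  destruct small_vectors_approximated as (M & r & HM & Hr & Happrox).
  pose proof Hcompl as (HEm & HEp & _ & _).
  exists (2 * M / r). split; [apply Rmult_le_pos; [lra | left; apply Rinv_0_lt_compat; lra]|].
  intro w. destruct (Rle_lt_or_eq_dec _ _ (norm_ge0 w)) as [Hw|Hw].
  - set (lam := r / (2 * bs_norm w)).
    assert (Hlam : 0 < lam) by (apply Rdiv_lt_0_compat; lra).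
    assert (Hsmall : bs_norm (bs_scal lam w) < r).
    { rewrite bs_normZ, Rabs_right by lra. unfold lam. field_simplify; lra. }
    destruct (Happrox _ Hsmall (lam * bs_norm w / 2)) as (a & b & Ha & Hb & Hna & Hnb & Herr).
    { apply Rdiv_lt_0_compat; [apply Rmult_lt_0_compat|]; lra. }
    assert (Hinv : 0 < / lam) by (apply Rinv_0_lt_compat; exact Hlam).
    assert (HL : / lam * M = 2 * M / r * bs_norm w) by (unfold lam; field; lra).
    exists (bs_scal (/ lam) a), (bs_scal (/ lam) b).
    split; [apply HEm; exact Ha|]. split; [apply HEp; exact Hb|].
    rewrite !bs_normZ, !Rabs_right by lra. rewrite <- HL.
    split; [apply Rmult_le_compat_l; lra|]. split; [apply Rmult_le_compat_l; lra|].
    replace (bs_sub w (bs_add (bs_scal (/ lam) a) (bs_scal (/ lam) b)))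
      with (bs_scal (/ lam) (bs_sub (bs_scal lam w) (bs_add a b)))
      by (rewrite scal_sub, bs_scalDr, bs_scalA, Rinv_l, bs_scal1 by lra; reflexivity).
    rewrite bs_normZ, Rabs_right by lra.
    apply (Rmult_lt_compat_l (/ lam)) in Herr; [|exact Hinv].
    replace (/ lam * (lam * bs_norm w / 2)) with (bs_norm w / 2) in Herr by (field; lra).
    lra.
  - rewrite <- Hw. exists bs_zero, bs_zero. pose proof (bs_norm_eq0 _ w (eq_sym Hw)) as ->.
    split; [apply HEm|]. split; [apply HEp|].
    rewrite bs_add0, subrr, !norm0. repeat split; lra.
Qed.

(** Iterating the coarse decomposition on the successive errors gives series in
    Em and Ep whose partial sums approach w geometrically. *)
Lemma successive_approximation (L : R) : 0 <= L ->
  (forall w, exists a b, Em a /\ Ep b /\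
    bs_norm a <= L * bs_norm w /\ bs_norm b <= L * bs_norm w /\
    bs_norm (bs_sub w (bs_add a b)) <= bs_norm w / 2) ->
  forall w, exists fa fb : nat -> B, (forall k, Em (fa k) /\ Ep (fb k) /\
      bs_norm (fa k) <= L * bs_norm w * (1/2) ^ k /\
      bs_norm (fb k) <= L * bs_norm w * (1/2) ^ k) /\
    forall N, bs_norm (bs_sub w (bs_add (psum fa N) (psum fb N))) <= bs_norm w * (1/2) ^ N.
Proof.
  intros HL Hcoarse w.
  destruct (choice (fun v (p : B * B) => Em (fst p) /\ Ep (snd p) /\
    bs_norm (fst p) <= L * bs_norm v /\ bs_norm (snd p) <= L * bs_norm v /\
    bs_norm (bs_sub v (bs_add (fst p) (snd p))) <= bs_norm v / 2)) as [h Hh].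
  { intro v. destruct (Hcoarse v) as (a & b & H). exists (a, b). exact H. }
  set (err := fun N => iter_op (fun v => bs_sub v (bs_add (fst (h v)) (snd (h v)))) N w).
  assert (Herr : forall N, bs_norm (err N) <= bs_norm w * (1/2) ^ N).
  { induction N; [change (err O) with w; simpl; lra|]. destruct (Hh (err N)) as (_ & _ & _ & _ & H).
    change (err (S N)) with (bs_sub (err N) (bs_add (fst (h (err N))) (snd (h (err N))))).
    simpl. lra. }
  exists (fun k => fst (h (err k))), (fun k => snd (h (err k))). split.
  - intro k. destruct (Hh (err k)) as (Ha & Hb & Hna & Hnb & _).
    pose proof (Herr k). pose proof (norm_ge0 (err k)).
    assert (L * bs_norm (err k) <= L * (bs_norm w * (1/2) ^ k)) by (apply Rmult_le_compat_l; lra).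
    rewrite Rmult_assoc. repeat split; auto; lra.
  - intro N. enough (E : bs_sub w (bs_add (psum (fun k => fst (h (err k))) N)
                                          (psum (fun k => snd (h (err k))) N)) = err N)
      by (rewrite E; apply Herr).
    induction N; [simpl; rewrite bs_add0; apply sub0|].
    rewrite !psum_back, addACA. unfold bs_sub in *. rewrite oppD, bs_addA, IHN. reflexivity.
Qed.

Theorem bounded_decomposition :
  exists K, 0 <= K /\ forall w, exists a b, Em a /\ Ep b /\ w = bs_add a b /\
    bs_norm a <= K * bs_norm w /\ bs_norm b <= K * bs_norm w.
Proof.
  destruct coarse_decomposition as (L & HL & Hcoarse).
  exists (2 * L). split; [lra|]. intro w.
  destruct (successive_approximation L HL Hcoarse w) as (fa & fb & Hf & Happrox).
  destruct (series_conv fa _ (1/2) ltac:(lra) (fun k => proj1 (proj2 (proj2 (Hf k)))))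
    as (a & Hsa & Hna).
  destruct (series_conv fb _ (1/2) ltac:(lra) (fun k => proj2 (proj2 (proj2 (Hf k)))))
    as (b & Hsb & Hnb).
  exists a, b. split; [|split].
  - apply (lim_closed Em (psum fa)); [apply Hcompl | | exact Hsa].
    intro N. apply psum_closed; [apply Hcompl | apply Hf].
  - apply (lim_closed Ep (psum fb)); [apply Hcompl | | exact Hsb].
    intro N. apply psum_closed; [apply Hcompl | apply Hf].
  - replace (2 * L * bs_norm w) with (L * bs_norm w / (1 - 1/2)) by field.
    split; [|split; assumption].
    apply (lim_unique (fun N => bs_add (psum fa N) (psum fb N))).
    + apply (lim_geometric _ _ (bs_norm w) (1/2)); [lra|].
      intro N. rewrite sub_sym_norm. apply Happrox.
    + apply lim_add; assumption.
Qed.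

End BoundedDecomposition.

Section Shadowing.
Context {B : BanachSpace}.
Variables T Tinv : B -> B.
Hypothesis HT : is_bounded_linear T.
Hypothesis HTTinv : forall x, T (Tinv x) = x.

(** Stable half of the linearized shadowing equation: a bounded Ep-valued
    forcing b admits the bounded solution U n = sum_k T^k b (n-1-k) of
    U (n+1) = b n + T (U n). *)
Lemma stable_solution (Ep : B -> Prop) : uniform_contraction_on T Ep ->
  exists K, 0 <= K /\ forall (b : Z -> B) (beta : R),
    (forall n, Ep (b n) /\ bs_norm (b n) <= beta) ->
    exists U : Z -> B, (forall n, U (n + 1)%Z = bs_add (b n) (T (U n))) /\
      forall n, bs_norm (U n) <= K * beta.
Proof.
  intros (C & t & HC & Ht & Hcontr).
  exists (C / (1 - t)). split; [apply Rlt_le, Rdiv_lt_0_compat; lra|].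
  intros b beta Hb.
  set (f := fun (n : Z) (k : nat) => iter_op T k (b (n - 1 - Z.of_nat k)%Z)).
  assert (Hf : forall n k, bs_norm (f n k) <= C * beta * t ^ k).
  { intros n k. destruct (Hb (n - 1 - Z.of_nat k)%Z) as [Hin Hle].
    specialize (Hcontr k _ Hin). pose proof (pow_le t k ltac:(lra)).
    assert (C * t ^ k * bs_norm (b (n - 1 - Z.of_nat k)%Z) <= C * t ^ k * beta)
      by (apply Rmult_le_compat_l; [apply Rmult_le_pos|]; lra).
    unfold f. lra. }
  destruct (choice (fun n L => lim (psum (f n)) L /\ bs_norm L <= C * beta / (1 - t)))
    as [U HU].
  { intro n. apply (series_conv (f n) (C * beta) t); [lra | apply Hf]. }
  exists U. split.
  - intro n. apply (lim_unique (fun N => psum (f (n + 1)%Z) (S N))).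
    + apply (lim_shiftn _ _ 1). apply HU.
    + apply (lim_ext (fun N => bs_add (b n) (T (psum (f n) N)))).
      * intro N. simpl. f_equal.
        -- unfold f. cbn [iter_op]. f_equal. lia.
        -- rewrite psum_linear by apply HT. apply psum_ext. intro k. unfold f.
           cbn [iter_op]. do 3 f_equal. lia.
      * apply lim_add; [apply lim_const | apply lim_bounded_linear; [exact HT | apply HU]].
  - intro n. replace (C / (1 - t) * beta) with (C * beta / (1 - t)) by (field; lra). apply HU.
Qed.

(** Unstable half: a bounded Em-valued forcing a admits the bounded solution
    V n = sum_k Tinv^(k+1) a (n+k) of T (V n) = a n + V (n+1). *)
Lemma unstable_solution (Em : B -> Prop) : uniform_contraction_on Tinv Em ->
  exists K, 0 <= K /\ forall (a : Z -> B) (alpha : R),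
    (forall n, Em (a n) /\ bs_norm (a n) <= alpha) ->
    exists V : Z -> B, (forall n, T (V n) = bs_add (a n) (V (n + 1)%Z)) /\
      forall n, bs_norm (V n) <= K * alpha.
Proof.
  intros (C & t & HC & Ht & Hcontr).
  exists (C / (1 - t)). split; [apply Rlt_le, Rdiv_lt_0_compat; lra|].
  intros a alpha Ha.
  set (g := fun (n : Z) (k : nat) => iter_op Tinv (S k) (a (n + Z.of_nat k)%Z)).
  assert (Hg : forall n k, bs_norm (g n k) <= C * alpha * t ^ k).
  { intros n k. destruct (Ha (n + Z.of_nat k)%Z) as [Hin Hle].
    specialize (Hcontr (S k) _ Hin). pose proof (pow_le t k ltac:(lra)).
    pose proof (norm_ge0 (a (n + Z.of_nat k)%Z)). simpl in Hcontr.
    assert (C * (t * t ^ k) * bs_norm (a (n + Z.of_nat k)%Z) <= C * t ^ k * alpha)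
      by (apply Rmult_le_compat; [apply Rmult_le_pos; [|apply Rmult_le_pos]
                                 | | apply Rmult_le_compat_l; [|nra] | ]; lra).
    unfold g. simpl. lra. }
  destruct (choice (fun n L => lim (psum (g n)) L /\ bs_norm L <= C * alpha / (1 - t)))
    as [V HV].
  { intro n. apply (series_conv (g n) (C * alpha) t); [lra | apply Hg]. }
  exists V. split.
  - intro n. apply (lim_unique (fun N => T (psum (g n) (S N)))).
    + apply (lim_bounded_linear T (fun N => psum (g n) (S N))); [exact HT|].
      apply (lim_shiftn _ _ 1). apply HV.
    + apply (lim_ext (fun N => bs_add (a n) (psum (g (n + 1)%Z) N))).
      * intro N. simpl. rewrite (proj1 (proj1 HT)). f_equal.
        -- unfold g. cbn [iter_op]. rewrite HTTinv. f_equal. lia.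
        -- rewrite psum_linear by apply HT. apply psum_ext. intro k. unfold g.
           cbn [iter_op]. rewrite HTTinv. do 3 f_equal. lia.
      * apply lim_add; [apply lim_const | apply HV].
  - intro n. replace (C / (1 - t) * alpha) with (C * alpha / (1 - t)) by (field; lra).
    apply HV.
Qed.

(** Every bounded sequence d admits a bounded solution u of the inhomogeneous
    equation u (n+1) = d n + T (u n): split d n along Em (+) Ep with bounded
    projections and combine the stable and unstable solutions. *)
Lemma bounded_linearized_solution (Em Ep : B -> Prop) : Defs.complementary Em Ep ->
  uniform_contraction_on T Ep -> uniform_contraction_on Tinv Em ->
  exists K, 0 <= K /\ forall (d : Z -> B) (delta : R), (forall n, bs_norm (d n) <= delta) ->
    exists u : Z -> B, (forall n, u (n + 1)%Z = bs_add (d n) (T (u n))) /\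
      forall n, bs_norm (u n) <= K * delta.
Proof.
  intros Hcompl Hstab Hunst.
  destruct (bounded_decomposition Em Ep Hcompl) as (Kp & HKp & Hdec).
  destruct (stable_solution Ep Hstab) as (Ks & HKs & Hstable).
  destruct (unstable_solution Em Hunst) as (Ku & HKu & Hunstable).
  exists ((Ks + Ku) * Kp). split; [apply Rmult_le_pos; lra|]. intros d delta Hd.
  destruct (choice (fun n (p : B * B) => Em (fst p) /\ Ep (snd p) /\
     d n = bs_add (fst p) (snd p) /\
     bs_norm (fst p) <= Kp * bs_norm (d n) /\ bs_norm (snd p) <= Kp * bs_norm (d n)))
    as [p Hp].
  { intro n. destruct (Hdec (d n)) as (a & b & H). exists (a, b). exact H. }
  assert (Hpd : forall n, Kp * bs_norm (d n) <= Kp * delta)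
    by (intro n; apply Rmult_le_compat_l; [exact HKp | apply Hd]).
  destruct (Hunstable (fun n => fst (p n)) (Kp * delta)) as (V & HVrec & HVb).
  { intro n. destruct (Hp n) as (H & _ & _ & Hn & _). specialize (Hpd n). split; [exact H | lra]. }
  destruct (Hstable (fun n => snd (p n)) (Kp * delta)) as (U & HUrec & HUb).
  { intro n. destruct (Hp n) as (_ & H & _ & _ & Hn). specialize (Hpd n). split; [exact H | lra]. }
  exists (fun n => bs_sub (U n) (V n)). split.
  - intro n. destruct (Hp n) as (_ & _ & Hdn & _).
    assert (HV1 : V (n + 1)%Z = bs_sub (T (V n)) (fst (p n)))
      by (rewrite HVrec, bs_addC, addK; reflexivity).
    rewrite HUrec, HV1, sub_add_sub, <- Hdn, <- (lin_sub T) by exact (proj1 HT).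
    reflexivity.
  - intro n. pose proof (norm_sub_le (U n) (V n)). specialize (HUb n). specialize (HVb n).
    lra.
Qed.

(** A generalized hyperbolic splitting yields the shadowing property: if u
    solves the linearized equation with forcing the defects
    d n = x (n+1) - T (x n) of the pseudo-orbit x, then x - u is an exact orbit
    within |u| of x. *)
Theorem shadowing_of_splitting (Em Ep : B -> Prop) : Defs.complementary Em Ep ->
  uniform_contraction_on T Ep -> uniform_contraction_on Tinv Em -> shadowing_property T.
Proof.
  intros Hcompl Hstab Hunst.
  destruct (bounded_linearized_solution Em Ep Hcompl Hstab Hunst) as (K & HK & Hsolve).
  intros eps Heps. set (delta := eps / (2 * (K + 1))).
  assert (Hdelta : 0 < delta) by (apply Rdiv_lt_0_compat; lra).
  assert (HKdelta : K * delta < eps)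
    by (unfold delta; apply (Rmult_lt_reg_r (2 * (K + 1))); [lra|]; field_simplify; nra).
  exists delta. split; [exact Hdelta|]. intros x Hx.
  set (d := fun n : Z => bs_sub (x (n + 1)%Z) (T (x n))).
  destruct (Hsolve d delta (fun n => Rlt_le _ _ (Hx n))) as (u & Hu & Hub).
  exists (bs_sub (x 0%Z) (u 0%Z)), (fun n => bs_sub (x n) (u n)).
  split; [reflexivity|]. split.
  - intro n. rewrite Hu, (lin_sub T) by exact (proj1 HT).
    replace (x (n + 1)%Z) with (bs_add (d n) (T (x n))) by (unfold d; apply subK).
    rewrite subD, subrr, add0l. reflexivity.
  - intro n. rewrite sub_subK. specialize (Hub n). lra.
Qed.

End Shadowing.

Section NonUniqueness.
Context {B : BanachSpace}.
Variables T Tinv : B -> B.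
Hypothesis HTTinv : forall x, T (Tinv x) = x.

Definition full_orbit (y : B) (n : Z) : B :=
  if (0 <=? n)%Z then iter_op T (Z.to_nat n) y else iter_op Tinv (Z.to_nat (- n)) y.

Lemma full_orbit_step (y : B) (n : Z) : full_orbit y (n + 1) = T (full_orbit y n).
Proof.
  unfold full_orbit. destruct (Z_le_gt_dec 0 n) as [Hn|Hn].
  - rewrite (proj2 (Z.leb_le 0 (n + 1)) ltac:(lia)), (proj2 (Z.leb_le 0 n) Hn).
    replace (Z.to_nat (n + 1)) with (S (Z.to_nat n)) by lia. reflexivity.
  - rewrite (proj2 (Z.leb_gt 0 n) ltac:(lia)).
    destruct (Z.eq_dec n (-1)) as [->|Hn1]; [simpl; rewrite HTTinv; reflexivity|].
    rewrite (proj2 (Z.leb_gt 0 (n + 1)) ltac:(lia)).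
    replace (Z.to_nat (- n)) with (S (Z.to_nat (- (n + 1)))) by lia.
    simpl. rewrite HTTinv. reflexivity.
Qed.

Lemma iter_op_shift (f : B -> B) (j : nat) (x : B) : iter_op f (S j) x = iter_op f j (f x).
Proof. induction j; simpl in *; [|rewrite IHj]; reflexivity. Qed.

(** A vector y in Em with T y in Ep has a bounded full orbit: its forward
    orbit is the T-orbit of T y in Ep, its backward orbit the Tinv-orbit of y
    in Em, and both contract. *)
Lemma full_orbit_bounded (Em Ep : B -> Prop) :
  uniform_contraction_on T Ep -> uniform_contraction_on Tinv Em ->
  exists K, 0 <= K /\ forall y, Em y -> Ep (T y) ->
    forall n, bs_norm (full_orbit y n) <= K * (bs_norm y + bs_norm (T y)).
Proof.
  intros (C1 & t1 & HC1 & Ht1 & Hc1) (C2 & t2 & HC2 & Ht2 & Hc2).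
  exists (1 + C1 + C2). split; [lra|]. intros y Hy HTy n.
  pose proof (norm_ge0 y). pose proof (norm_ge0 (T y)).
  enough (bs_norm (full_orbit y n) <= bs_norm y + C1 * bs_norm (T y) + C2 * bs_norm y) by nra.
  unfold full_orbit. destruct (0 <=? n)%Z.
  - destruct (Z.to_nat n) as [|j]; [simpl; nra|].
    rewrite iter_op_shift. specialize (Hc1 j _ HTy).
    assert (C1 * t1 ^ j * bs_norm (T y) <= C1 * 1 * bs_norm (T y)).
    { apply Rmult_le_compat_r, Rmult_le_compat_l; [lra | lra | apply pow_le_one; lra]. }
    assert (0 <= C2 * bs_norm y) by (apply Rmult_le_pos; lra). lra.
  - specialize (Hc2 (Z.to_nat (- n)) _ Hy).
    assert (C2 * t2 ^ Z.to_nat (- n) * bs_norm y <= C2 * 1 * bs_norm y).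
    { apply Rmult_le_compat_r, Rmult_le_compat_l; [lra | lra | apply pow_le_one; lra]. }
    assert (0 <= C1 * bs_norm (T y)) by (apply Rmult_le_pos; lra). lra.
Qed.

Lemma small_nonzero_orbit (Em Ep : B -> Prop) (x0 : B) : is_linear T ->
  closed_subspace Em -> closed_subspace Ep ->
  uniform_contraction_on T Ep -> uniform_contraction_on Tinv Em ->
  x0 <> bs_zero -> Em x0 -> Ep (T x0) ->
  forall eps, 0 < eps -> exists y, y <> bs_zero /\ forall n, bs_norm (full_orbit y n) < eps.
Proof.
  intros HT HEm HEp Hstab Hunst Hx0 HEx0 HETx0 eps Heps.
  destruct (full_orbit_bounded Em Ep Hstab Hunst) as (K & HK & Hbound).
  set (M := K * (bs_norm x0 + bs_norm (T x0))).
  assert (HM : 0 <= M) by (pose proof (norm_ge0 x0); pose proof (norm_ge0 (T x0));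
                           apply Rmult_le_pos; lra).
  set (s := eps / (2 * (M + 1))).
  assert (Hs : 0 < s) by (apply Rdiv_lt_0_compat; lra).
  assert (HsM : s * M < eps)
    by (unfold s; apply (Rmult_lt_reg_r (2 * (M + 1))); [lra|]; field_simplify; nra).
  exists (bs_scal s x0). split; [apply scal_neq0; [lra | exact Hx0]|].
  intro n. assert (HTs : T (bs_scal s x0) = bs_scal s (T x0)) by apply HT.
  specialize (Hbound (bs_scal s x0)). rewrite HTs in Hbound.
  specialize (Hbound (proj1 (proj2 (proj2 HEm)) s x0 HEx0)
                     (proj1 (proj2 (proj2 HEp)) s _ HETx0) n).
  rewrite !bs_normZ, Rabs_right in Hbound by lra.
  replace (K * (s * bs_norm x0 + s * bs_norm (T x0))) with (s * M) in Hbound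
    by (unfold M; ring).
  lra.
Qed.

Lemma full_orbit_shadows_zero (eps : R) (y : B) :
  (forall n, bs_norm (full_orbit y n) < eps) -> shadows T eps y (fun _ => bs_zero).
Proof.
  intro Hy. exists (full_orbit y). split; [reflexivity|]. split; [exact (full_orbit_step y)|].
  intro n. unfold bs_sub. rewrite add0l, norm_opp. apply Hy.
Qed.

(** A shifted hyperbolic operator lacks unique shadowing: the zero orbit is
    eps-shadowed both by 0 and by a nonzero vector, for every eps > 0. *)
Theorem not_unique_shadowing (Em Ep : B -> Prop) (x0 : B) : is_linear T ->
  closed_subspace Em -> closed_subspace Ep ->
  uniform_contraction_on T Ep -> uniform_contraction_on Tinv Em ->
  x0 <> bs_zero -> Em x0 -> Ep (T x0) -> ~ unique_shadowing_property T.
Proof.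
  intros HT HEm HEp Hstab Hunst Hx0 HEx0 HETx0 (eps0 & delta0 & Heps0 & _ & Husp).
  destruct (Husp eps0 Heps0 (Rle_refl _)) as (delta & Hdelta & _ & Hunique).
  destruct (Hunique (fun _ => bs_zero)) as (y & _ & Hy).
  { intro n. rewrite lin0, subrr, norm0 by exact HT. exact Hdelta. }
  destruct (small_nonzero_orbit Em Ep x0 HT HEm HEp Hstab Hunst Hx0 HEx0 HETx0 eps0 Heps0)
    as (y' & Hy'0 & Hy'small).
  apply Hy'0. transitivity y; [apply Hy, full_orbit_shadows_zero, Hy'small|].
  symmetry. apply Hy. exists (fun _ => bs_zero). split; [reflexivity|]. split.
  - intro n. symmetry. apply lin0, HT.
  - intro n. rewrite subrr, norm0. exact Heps0.
Qed.

End NonUniqueness.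

(** Only the splitting, the two contraction
    estimates and T (Tinv x) = x are needed; invariance of Em and Ep is not. *)
Theorem mainTheorem16 (B : BanachSpace) (T : B -> B) :
  is_aut T -> shifted_hyperbolic T ->
  shadowing_property T /\ ~ unique_shadowing_property T.
Proof.
  intros [HT _] (Tinv & Em & Ep & _ & HTTinv & (Hcompl & _ & _ & Hstab & Hunst) &
                 x0 & Hx0 & HEx0 & HETx0).
  pose proof Hcompl as (HEm & HEp & _ & _).
  split.
  - exact (shadowing_of_splitting T Tinv HT HTTinv Em Ep Hcompl Hstab Hunst).
  - exact (not_unique_shadowing T Tinv HTTinv Em Ep x0 (proj1 HT) HEm HEp Hstab Hunst
             Hx0 HEx0 HETx0).
Qed.
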